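(* For every $m\ge3$ there is a subgroup $G\subset\mathrm{Sp}_{2m}(\mathbb{F}_2)$ such that (a) no quadratic form of Arf invariant $0$ with polar form $\langle,\rangle$ is fixed by all elements of $G$, and (b) for every $g\in G$ there is a quadratic form of Arf invariant $0$ with polar form $\langle,\rangle$ fixed by $g$.
   Context: $\langle,\rangle$ is the standard alternating form on $\mathbb{F}_2^{\oplus2m}$ ($\langle e_i,e_j\rangle=\langle f_i,f_j\rangle=0$, $\langle e_i,f_j\rangle=\langle f_j,e_i\rangle=\delta_{ij}$), and $\mathrm{Sp}_{2m}(\mathbb{F}_2)$ its automorphism group. A quadratic form with polar form $\langle,\rangle$ is $Q$ with $Q(x+y)-Q(x)-Q(y)=\langle x,y\rangle$; $\mathrm{Sp}_{2m}(\mathbb{F}_2)$ acts by $(g\cdot Q)(x)=Q(g^{-1}x)$. The Arf invariant of $Q$ is $\sum_i Q(e_i)Q(f_i)$ for a symplectic basis, equivalently the $a$ with $\#\{x:Q(x)=a\}=2^{m-1}(2^m+1)$. *)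

From HB Require Import structures.
From mathcomp Require Import all_boot all_order all_algebra all_fingroup.
Set Implicit Arguments. Unset Strict Implicit. Unset Printing Implicit Defensive.
Import GRing.Theory.
Local Open Scope ring_scope.

(* F_2^{2m}, coordinates indexed by 'I_(m + m): lshift i = e_i, rshift i = f_i *)
Definition V (m : nat) := 'rV['F_2]_(m + m).

Definition e_ (m : nat) (i : 'I_m) : V m := delta_mx 0 (lshift m i).
Definition f_ (m : nat) (i : 'I_m) : V m := delta_mx 0 (rshift m i).

Definition sform (m : nat) (x y : V m) : 'F_2 :=
  \sum_(i < m) (x 0 (lshift m i) * y 0 (rshift m i)
              + x 0 (rshift m i) * y 0 (lshift m i)).

Definition Sp (m : nat) : {set {perm V m}} :=
  [set g : {perm V m} | [forall x : V m, forall y : V m,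
      (g (x + y) == g x + g y) && (sform (g x) (g y) == sform x y)]].

Definition is_quad (m : nat) (Q : V m -> 'F_2) : Prop :=
  forall x y : V m, Q (x + y) - Q x - Q y = sform x y.

(* Arf invariant via the standard symplectic basis *)
Definition arf (m : nat) (Q : V m -> 'F_2) : 'F_2 :=
  \sum_(i < m) Q (e_ i) * Q (f_ i).

(* (g . Q)(x) = Q (g^{-1} x); Q is fixed by g iff g . Q = Q *)
Definition fixes (m : nat) (g : {perm V m}) (Q : V m -> 'F_2) : Prop :=
  forall x : V m, Q ((g^-1)%g x) = Q x.

From HB Require Import structures.
From mathcomp Require Import all_boot all_order all_algebra all_fingroup.
From mathcomp Require Import ring.
Import GRing.Theory.
Set Implicit Arguments.
Unset Strict Implicit.
Unset Printing Implicit Defensive.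
Local Open Scope ring_scope.

(* Fix an isotropic plane <a, b>, e.g. a = e_0 and b = e_1 (so m >= 2 suffices), and
   for p, q in F_2 let [shear p q] be the product of the transvections along p a,
   (p + q) b and q (a + b); these four maps form a subgroup of Sp.  A quadratic form Q
   is invariant under the transvection along v as soon as Q v = 1, so [shear p q]
   fixes every Q with Q a = p and Q b = p + q, hence Q (a + b) = q; such a Q can be
   chosen with Arf invariant 0.  On the other hand a Q fixed by the whole group takes
   the value 1 at a, b and a + b, contradicting Q (a + b) = Q a + Q b. *)

Lemma F2_cases (a : 'F_2) : a = 0 \/ a = 1.
Proof. by case: a => [[|[|n]] Ha] //; [left | right]; apply/val_inj. Qed.

Lemma F2_addrr (a : 'F_2) : a + a = 0.
Proof. exact/addrr_pchar2/pchar_Fp. Qed.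

Lemma F2_mulrr (a : 'F_2) : a * a = a.
Proof. by case: (F2_cases a) => ->; rewrite ?mul0r ?mul1r. Qed.

Section SymplecticForm.
Variable m : nat.
Implicit Types (x y z : V m) (a : 'F_2).

Lemma sformC x y : sform x y = sform y x.
Proof. by apply: eq_bigr => i _; rewrite addrC [x _ _ * _]mulrC [x _ _ * _]mulrC. Qed.

Lemma sformDl x y z : sform (x + y) z = sform x z + sform y z.
Proof. by rewrite /sform -big_split; apply: eq_bigr => i _ /=; rewrite !mxE; ring. Qed.

Lemma sformZl a x y : sform (a *: x) y = a * sform x y.
Proof. by rewrite /sform mulr_sumr; apply: eq_bigr => i _; rewrite !mxE; ring. Qed.

Lemma sformDr x y z : sform x (y + z) = sform x y + sform x z.
Proof. by rewrite sformC sformDl -!(sformC x). Qed.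

Lemma sformZr a x y : sform x (a *: y) = a * sform x y.
Proof. by rewrite sformC sformZl sformC. Qed.

Lemma sformxx x : sform x x = 0.
Proof. by apply: big1 => i _; rewrite mulrC F2_addrr. Qed.

Lemma e_lshift i k : (e_ i : V m) 0 (lshift m k) = (i == k)%:R.
Proof. by rewrite /e_ mxE eqxx eq_lshift eq_sym. Qed.

Lemma e_rshift i k : (e_ i : V m) 0 (rshift m k) = 0.
Proof. by rewrite /e_ mxE eq_rlshift andbF. Qed.

Lemma f_lshift i k : (f_ i : V m) 0 (lshift m k) = 0.
Proof. by rewrite /f_ mxE eq_lrshift andbF. Qed.

Lemma f_rshift i k : (f_ i : V m) 0 (rshift m k) = (i == k)%:R.
Proof. by rewrite /f_ mxE eqxx eq_rshift eq_sym. Qed.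

Lemma sum_delta (F : 'I_m -> 'F_2) i : \sum_k (i == k)%:R * F k = F i.
Proof.
rewrite (bigD1 i) //= eqxx mul1r big1 ?addr0 // => k ki.
by rewrite eq_sym (negbTE ki) mul0r.
Qed.

Lemma sform_e x i : sform x (e_ i) = x 0 (rshift m i).
Proof.
rewrite /sform -(sum_delta (fun k => x 0 (rshift m k)) i).
by apply: eq_bigr => k _; rewrite e_lshift e_rshift mulr0 add0r mulrC.
Qed.

Lemma sform_f x i : sform x (f_ i) = x 0 (lshift m i).
Proof.
rewrite /sform -(sum_delta (fun k => x 0 (lshift m k)) i).
by apply: eq_bigr => k _; rewrite f_lshift f_rshift mulr0 addr0 mulrC.
Qed.

Lemma sform_e_e i j : sform (e_ i : V m) (e_ j) = 0.
Proof. by rewrite sform_e e_rshift. Qed.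

Lemma sform_f_e i j : sform (f_ i : V m) (e_ j) = (i == j)%:R.
Proof. by rewrite sform_e f_rshift. Qed.

End SymplecticForm.

Section QuadraticForm.
Variables (m : nat) (Q : V m -> 'F_2).
Hypothesis quadQ : is_quad Q.
Implicit Types (x y v w : V m) (a : 'F_2).

Lemma quadD x y : Q (x + y) = Q x + Q y + sform x y.
Proof. by rewrite -(quadQ x y); ring. Qed.

Lemma quad0 : Q 0 = 0.
Proof.
have := quadQ 0 0; rewrite addr0 subrr sub0r sformxx.
by move/eqP; rewrite oppr_eq0 => /eqP.
Qed.

Lemma quadZ a x : Q (a *: x) = a * Q x.
Proof. by case: (F2_cases a) => ->; rewrite ?scale0r ?scale1r ?quad0 ?mul0r ?mul1r. Qed.

Lemma quad_translate_invariant x w : Q (x + w) = Q x -> Q w = sform x w.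
Proof.
rewrite quadD -addrA -{2}[Q x]addr0 => /addrI/eqP.
by rewrite addr_eq0 oppr_pchar2 ?pchar_Fp // => /eqP.
Qed.

End QuadraticForm.

Lemma fixesP m (g : {perm V m}) (Q : V m -> 'F_2) :
  fixes g Q <-> forall x, Q (g x) = Q x.
Proof.
split=> fixQ x; last by rewrite -{2}(permKV g x) fixQ.
by rewrite -(fixQ (g x)) permK.
Qed.

Section Transvection.
Variable m : nat.
Implicit Types (x y u v : V m) (a : 'F_2).

Definition transvection v x : V m := x + sform x v *: v.

Lemma transvectionD v : {morph transvection v : x y / x + y}.
Proof. by move=> x y; rewrite /transvection sformDl scalerDl addrACA. Qed.

Lemma sform_transvection v x y :
  sform (transvection v x) (transvection v y) = sform x y.
Proof.
rewrite /transvection sformDl !sformDr !sformZl !sformZr sformxx [sform v y]sformC.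
by rewrite !mulr0 addr0 [sform y v * _]mulrC -addrA F2_addrr addr0.
Qed.

Lemma sform_transvection_orth u v x :
  sform v u = 0 -> sform (transvection v x) u = sform x u.
Proof. by move=> vu0; rewrite sformDl sformZl vu0 mulr0 addr0. Qed.

Lemma transvectionK v : involutive (transvection v).
Proof.
move=> x; rewrite {1}/transvection sform_transvection_orth ?sformxx //.
by rewrite /transvection -addrA -scalerDl F2_addrr scale0r addr0.
Qed.

Lemma transvection0 x : transvection 0 x = x.
Proof. by rewrite /transvection scaler0 addr0. Qed.

Lemma transvectionZ a v x :
  transvection (a *: v) x = x + (a * sform x v) *: v.
Proof. by rewrite /transvection sformZr scalerA mulrAC F2_mulrr. Qed.

Lemma quad_transvection (Q : V m -> 'F_2) v x : is_quad Q ->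
  Q (transvection v x) = Q x + sform x v * (Q v + 1).
Proof. by move=> quadQ; rewrite quadD // quadZ // sformZr F2_mulrr; ring. Qed.

Lemma quad_transvection_fixed (Q : V m -> 'F_2) v x : is_quad Q ->
  Q (transvection (Q v *: v) x) = Q x.
Proof.
move=> quadQ; case: (F2_cases (Q v)) => Qv; rewrite Qv ?scale0r ?transvection0 //.
by rewrite scale1r quad_transvection // Qv F2_addrr mulr0 addr0.
Qed.

End Transvection.

Section IsotropicPlane.
Variables (m : nat) (a b : V m).
Hypothesis ab0 : sform a b = 0.
Implicit Types (p q : 'F_2) (x u : V m).

Definition shear p q x : V m :=
  transvection (p *: a) (transvection ((p + q) *: b) (transvection (q *: (a + b)) x)).

Lemma sform_shearl p q x u : sform a u = 0 -> sform b u = 0 ->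
  sform (shear p q x) u = sform x u.
Proof.
move=> au0 bu0.
by rewrite !sform_transvection_orth // sformZl ?sformDl ?au0 ?bu0 ?addr0 mulr0.
Qed.

Lemma shearE p q x : shear p q x = x + (q * sform x (a + b)) *: (a + b)
  + ((p + q) * sform x b) *: b + (p * sform x a) *: a.
Proof.
rewrite /shear !transvectionZ !sformDl !sformZl !sformDl [sform b a]sformC ab0 !sformxx.
by rewrite !(addr0, mulr0).
Qed.

Lemma shearM p q p' q' x :
  shear p q (shear p' q' x) = shear (p + p') (q + q') x.
Proof.
have aa0 := sformxx a; have bb0 := sformxx b.
have ba0 : sform b a = 0 by rewrite sformC.
have ac0 : sform a (a + b) = 0 by rewrite sformDr aa0 ab0 addr0.
have bc0 : sform b (a + b) = 0 by rewrite sformDr ba0 bb0 addr0.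
rewrite [shear p q _]shearE !sform_shearl // !shearE.
by apply/rowP => j; rewrite !mxE; ring.
Qed.

Lemma shear0 x : shear 0 0 x = x.
Proof. by rewrite /shear addr0 !scale0r !transvection0. Qed.

Lemma shearK p q : involutive (shear p q).
Proof. by move=> x; rewrite shearM !F2_addrr shear0. Qed.

Definition shear_perm p q : {perm V m} := perm (can_inj (shearK p q)).

Definition shear_set : {set {perm V m}} :=
  [set shear_perm s.1 s.2 | s : 'F_2 * 'F_2].

Lemma group_set_shear : group_set shear_set.
Proof.
apply/group_setP; split.
  by apply/imsetP; exists (0, 0) => //; apply/permP => x; rewrite perm1 permE shear0.
move=> _ _ /imsetP[[p q] _ ->] /imsetP[[p' q'] _ ->].
apply/imsetP; exists (p' + p, q' + q) => //.
by apply/permP => x; rewrite permM !permE shearM.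
Qed.

Definition shear_group := Group group_set_shear.

Lemma mem_shear_group p q : shear_perm p q \in shear_group.
Proof. by apply/imsetP; exists (p, q). Qed.

Lemma shearD p q : {morph shear p q : x y / x + y}.
Proof.
move=> x y; rewrite /shear (transvectionD (q *: (a + b))).
by rewrite (transvectionD ((p + q) *: b)) transvectionD.
Qed.

Lemma sform_shear p q x y : sform (shear p q x) (shear p q y) = sform x y.
Proof. by rewrite /shear !sform_transvection. Qed.

Lemma shear_Sp p q : shear_perm p q \in Sp m.
Proof.
rewrite inE; apply/forallP => x; apply/forallP => y.
by rewrite !permE shearD sform_shear !eqxx.
Qed.

Lemma quad_shear_invariant Q p q x : is_quad Q -> Q a = p -> Q b = p + q ->
  Q (shear p q x) = Q x.
Proof.
move=> quadQ Qa Qb; have Qc : Q (a + b) = q.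
  by rewrite quadD // ab0 addr0 Qa Qb addrA F2_addrr add0r.
by rewrite /shear -{1}Qa -Qb -Qc !quad_transvection_fixed.
Qed.

Lemma no_quad_shear_invariant Q x0 x1 : is_quad Q ->
  sform x0 a = 1 -> sform x0 b = 0 -> sform x1 a = 0 -> sform x1 b = 1 ->
  ~ (forall p q x, Q (shear p q x) = Q x).
Proof.
move=> quadQ x0a x0b x1a x1b invQ.
have Qa : Q a = 1.
  rewrite -x0a; apply: (quad_translate_invariant quadQ).
  by rewrite -(invQ 1 0 x0) shearE x0a x0b !(mul0r, mulr0, mul1r, scale0r, scale1r, addr0).
have Qb : Q b = 1.
  rewrite -x1b; apply: (quad_translate_invariant quadQ).
  by rewrite -(invQ 1 0 x1) shearE x1a x1b !(mul0r, mulr0, mul1r, scale0r, scale1r, addr0).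
have Qc : Q (a + b) = 1.
  have x0c : sform x0 (a + b) = 1 by rewrite sformDr x0a x0b addr0.
  rewrite -x0c; apply: (quad_translate_invariant quadQ).
  rewrite -(invQ 0 1 x0) shearE x0c x0b.
  by rewrite !(mul0r, mulr0, mul1r, scale0r, scale1r, addr0, add0r).
by move: Qc; rewrite quadD // Qa Qb ab0 F2_addrr add0r => /esym/eqP; rewrite oner_eq0.
Qed.

End IsotropicPlane.

Section StandardQuadraticForms.
Variable m : nat.
Implicit Types (l x y : V m).

Definition qhyp x : 'F_2 := \sum_k x 0 (lshift m k) * x 0 (rshift m k).

Definition qform l x : 'F_2 := qhyp x + sform x l.

Lemma qhyp_quad : is_quad qhyp.
Proof.
move=> x y; rewrite /qhyp /sform -!sumrB.
by apply: eq_bigr => k _; rewrite !mxE; ring.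
Qed.

Lemma qform_quad l : is_quad (qform l).
Proof. by move=> x y; rewrite /qform sformDl -(qhyp_quad x y); ring. Qed.

Lemma qform_e l i : qform l (e_ i) = l 0 (rshift m i).
Proof.
by rewrite /qform /qhyp big1 => [|k _]; rewrite ?e_rshift ?mulr0 // add0r sformC sform_e.
Qed.

Lemma qform_f l i : qform l (f_ i) = l 0 (lshift m i).
Proof.
by rewrite /qform /qhyp big1 => [|k _]; rewrite ?f_lshift ?mul0r // add0r sformC sform_f.
Qed.

Lemma arf_qform l : arf (qform l) = qhyp l.
Proof. by apply: eq_bigr => i _; rewrite qform_e qform_f mulrC. Qed.

Lemma exists_quad_arf0 i0 i1 (u v : 'F_2) : i0 != i1 ->
  exists2 Q : V m -> 'F_2, is_quad Q /\ arf Q = 0 & Q (e_ i0) = u /\ Q (e_ i1) = v.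
Proof.
move=> i01; pose l := u *: f_ i0 + v *: f_ i1.
have l_e k : l 0 (lshift m k) = 0 by rewrite !mxE !eq_lrshift andbF !mulr0 addr0.
have l_f k : l 0 (rshift m k) = u * (k == i0)%:R + v * (k == i1)%:R.
  by rewrite !mxE !eqxx !eq_rshift.
exists (qform l); split.
- exact: qform_quad.
- by rewrite arf_qform; apply: big1 => k _; rewrite l_e mul0r.
- by rewrite qform_e l_f eqxx (negbTE i01) mulr1 mulr0 addr0.
- by rewrite qform_e l_f eqxx eq_sym (negbTE i01) mulr1 mulr0 add0r.
Qed.

End StandardQuadraticForms.

Theorem mainTheorem11 (m : nat) (hm : (3 <= m)%N) :
  exists G : {group {perm V m}},
    G \subset Sp m /\
    ~ (exists Q : V m -> 'F_2,
          is_quad Q /\ arf Q = 0 /\ forall g, g \in G -> fixes g Q) /\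
    (forall g, g \in G ->
       exists Q : V m -> 'F_2, is_quad Q /\ arf Q = 0 /\ fixes g Q).
Proof.
pose i0 : 'I_m := Ordinal (leq_trans (isT : 1 <= 3)%N hm).
pose i1 : 'I_m := Ordinal (leq_trans (isT : 2 <= 3)%N hm).
have i01 : i0 != i1 by [].
have i10 : i1 != i0 by [].
have ab0 := sform_e_e i0 i1.
exists (shear_group ab0); split; [|split].
- by apply/subsetP => _ /imsetP[s _ ->]; apply: shear_Sp.
- case=> Q [quadQ [_ fixQ]].
  apply: (no_quad_shear_invariant (x0 := f_ i0) (x1 := f_ i1) ab0 quadQ);
    rewrite ?sform_f_e ?eqxx ?(negbTE i01) ?(negbTE i10) // => p q x.
  by have /fixQ/fixesP/(_ x) := mem_shear_group ab0 p q; rewrite permE.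
- move=> _ /imsetP[[p q] _ ->].
  have [Q [quadQ arfQ] [Qa Qb]] := exists_quad_arf0 p (p + q) i01.
  exists Q; do 2?split => //.
  by apply/fixesP => x; rewrite permE (quad_shear_invariant ab0).
Qed.
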